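(* Let $a,b\ge1$ be integers. Let $\mathcal{C}$ be a chain with spine $P=v_0,\dots,v_m$ and arc partition $A(P)=A_1\cup A_2$, and suppose $|A_2|\ge a(b+1)-1$. Then $\mathcal{C}$ contains a strong $(a,b)$-alternating-path $R$ with $s_1(R)=v_0$ and $t_a(R)=v_m$.
   Context: Fix $b\ge1$ and $g:=4b^2$. Gadgets have designated vertices $p,q$ with arc $(p,q)$. Type I: a directed cycle of length at least $g$ through $(p,q)$. Basic type II: vertices $p,q,r$ and a directed path $P_1$ from $r$ to $p$ of length at least $2b^2+b-2$, $q\notin V(P_1)$, every vertex of $P_1$ having an arc to $q$. Type III: vertices $p,q,r$, the arc $(p,q)$, and two internally vertex-disjoint directed paths $P_1,P_2$ from $p$ and from $q$ respectively to $r$, each of length at least $2b-1$. A trivial gadget consists only of $p,q$ and the arc $(p,q)$. A chain $\mathcal{C}$ consists of a directed path $P=v_0,\dots,v_m$ (the spine), a partition $A_1\cup A_2$ of its arc set, and non-trivial gadgets $(G_e)_{e\in A_2}$ such that: each $G_e$ is of type I, type III, or basic type II; for $e=(v_i,v_{i+1})\in A_2$, $p(G_e)=v_i$, $q(G_e)=v_{i+1}$ and $V(G_e)\cap\{v_0,\dots,v_m\}=\{v_i,v_{i+1}\}$; and $V(G_e)\cap V(G_f)\subseteq\{v_0,\dots,v_m\}$ for distinct $e,f\in A_2$. The chain is identified with the digraph $P\cup\bigcup_{e\in A_2}G_e$. An $(a,b)$-alternating-path is an oriented path $R$ consisting of vertices $s_1,\dots,s_a,t_1,\dots,t_a$ and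 pairwise internally vertex-disjoint directed paths $Q_1,\dots,Q_a,Q'_1,\dots,Q'_{a-1}$, $Q_i$ from $s_i$ to $t_i$, $Q'_i$ from $s_{i+1}$ to $t_i$, with $Q_2,\dots,Q_{a-1},Q'_1,\dots,Q'_{a-1}$ of length at least $b$; it is strong if also $Q_1$ and $Q_a$ have length at least $b$. *)

From mathcomp Require Import all_boot.
Set Implicit Arguments. Unset Strict Implicit. Unset Printing Implicit Defensive.

Section Defs.
Variable V : finType.

Definition arcs_of (s : seq V) : {set V * V} := [set e in zip s (behead s)].

Definition dpath (A : {set V * V}) (x y : V) (P : seq V) : Prop :=
  exists P' : seq V, [/\ P = x :: P', last x P' = y, uniq P &
                         path (fun u v => (u, v) \in A) x P'].

Definition plen (P : seq V) : nat := (size P).-1.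

(* Type I gadget: exactly a directed cycle q = c_0 -> c_1 -> ... -> c_{k-1} = p -> q
   of length k >= g = 4 b^2 (so it passes through the arc (p,q)). *)
Definition gadget_I (b : nat) (VG : {set V}) (AG : {set V * V}) (p q : V) : Prop :=
  exists c' : seq V,
    [/\ uniq (q :: c'), last q c' = p, 4 * b ^ 2 <= size (q :: c'),
        VG = [set x in q :: c'] & AG = arcs_of (rcons (q :: c') q)].

Definition gadget_II (b : nat) (VG : {set V}) (AG : {set V * V}) (p q : V) : Prop :=
  exists (r : V) (P1 : seq V),
    [/\ dpath (arcs_of P1) r p P1, 2 * b ^ 2 + b - 2 <= plen P1, q \notin P1,
        VG = q |: [set x in P1] &
        AG = arcs_of P1 :|: [set (x, q) | x in P1]].

Definition gadget_III (b : nat) (VG : {set V}) (AG : {set V * V}) (p q : V) : Prop :=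
  exists (r : V) (P1 P2 : seq V),
    [/\ p != q /\ dpath (arcs_of P1) p r P1 /\ dpath (arcs_of P2) q r P2,
        [set x in P1] :&: [set x in P2] = [set r],
        2 * b - 1 <= plen P1 /\ 2 * b - 1 <= plen P2,
        VG = [set x in P1] :|: [set x in P2] &
        AG = (p, q) |: (arcs_of P1 :|: arcs_of P2)].

(* A chain with spine v0 :: vs = v_0, ..., v_m, A2 the set of arcs carrying
   a gadget (A1 is the complement in the spine's arc set), gadget G_e given by
   vertex set VG e and arc set AG e, with p(G_e) = e.1, q(G_e) = e.2. *)
Definition is_chain (b : nat) (v0 : V) (vs : seq V) (A2 : {set V * V})
    (VG : V * V -> {set V}) (AG : V * V -> {set V * V}) : Prop :=
  [/\ uniq (v0 :: vs),
      A2 \subset arcs_of (v0 :: vs),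
      (forall e, e \in A2 ->
         [set x in v0 :: vs] :&: VG e = [set e.1; e.2] /\
         [\/ gadget_I b (VG e) (AG e) e.1 e.2,
             gadget_II b (VG e) (AG e) e.1 e.2 |
             gadget_III b (VG e) (AG e) e.1 e.2]) &
      (forall e f, e \in A2 -> f \in A2 -> e != f ->
         VG e :&: VG f \subset [set x in v0 :: vs])].

Definition chain_arcs (v0 : V) (vs : seq V) (A2 : {set V * V})
    (AG : V * V -> {set V * V}) : {set V * V} :=
  arcs_of (v0 :: vs) :|: \bigcup_(e in A2) AG e.

(* The vertex sequence of the oriented path
   R = s_1 Q_1 t_1 (Q'_1)^{-1} s_2 Q_2 t_2 ... s_a Q_a t_a   (0-based indices). *)
Definition alt_vertices (a : nat) (Q Q' : nat -> seq V) : seq V :=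
  Q 0 ++ flatten [seq behead (rev (Q' i)) ++ behead (Q i.+1) | i <- iota 0 a.-1].

(* (a,b)-alternating path in the digraph with arc set A (0-based indices:
   s_i = s (i-1), Q_i = Q (i-1), Q'_i = Q' (i-1)). R being an oriented path
   is expressed by all its vertices being distinct (which in particular makes
   the Q's and Q''s pairwise internally vertex-disjoint). *)
Definition alt_path (A : {set V * V}) (a b : nat) (s t : nat -> V)
    (Q Q' : nat -> seq V) : Prop :=
  [/\ forall i, i < a -> dpath A (s i) (t i) (Q i),
      forall i, i.+1 < a -> dpath A (s i.+1) (t i) (Q' i),
      forall i, 0 < i -> i.+1 < a -> b <= plen (Q i),
      forall i, i.+1 < a -> b <= plen (Q' i) &
      uniq (alt_vertices a Q Q')].

Definition strong_alt_path (A : {set V * V}) (a b : nat) (s t : nat -> V)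
    (Q Q' : nat -> seq V) : Prop :=
  [/\ alt_path A a b s t Q Q', b <= plen (Q 0) & b <= plen (Q a.-1)].

End Defs.

(* Walk the spine backwards from v_m, keeping an alternating path from the
   current spine vertex to v_m with a segments whose first segment has length
   >= c, as long as (a-1)(b+1) + c <= |A_2| on the part already walked.
   Prepending a spine arc lengthens the first segment by one.  A gadget on the
   arc (p, q) is itself a (2,b)-alternating path from p to q (type I: the
   cycle read backwards; type II: P_1 read backwards, then the arc (r, q);
   type III: P_1 forwards and P_2 backwards), and gluing it at q, once the
   first segment from q has length b, makes that segment interior.  So every
   new segment is paid for by b + 1 gadgets: b that lengthened the previous
   first segment and the one that was glued. *)

From mathcomp Require Import all_boot zify.
Set Implicit Arguments. Unset Strict Implicit. Unset Printing Implicit Defensive.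

Section Walks.
Variable V : finType.
Implicit Types (x y z : V) (s P R : seq V) (A B : {set V * V}).

Lemma arcs_of_cons2 x y s : arcs_of [:: x, y & s] = (x, y) |: arcs_of (y :: s).
Proof. by apply/setP => e; rewrite !inE. Qed.

Lemma mem_arcs_of s e : e \in arcs_of s -> e.1 \in s /\ e.2 \in s.
Proof.
elim: s => [|x [|y s] IH]; try by rewrite !inE.
rewrite arcs_of_cons2 in_setU1; case/orP => [/eqP -> | /IH [h1 h2]].
  by rewrite !inE !eqxx orbT.
by split; rewrite in_cons ?h1 ?h2 orbT.
Qed.

Lemma path_arcs_of x s R : path (fun u v => (u, v) \in arcs_of (x :: s ++ R)) x s.
Proof.
elim: s x => [|y s IH] x //=; rewrite arcs_of_cons2 setU11 /=.
by apply: sub_path (IH y) => u v /= uv; rewrite in_setU1 uv orbT.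
Qed.

Lemma dpath_arcs_of x s R :
  uniq (x :: s) -> dpath (arcs_of (x :: s ++ R)) x (last x s) (x :: s).
Proof. by move=> us; exists s; split; last exact: path_arcs_of. Qed.

Lemma dpath_sub A B x y P : A \subset B -> dpath A x y P -> dpath B x y P.
Proof.
move=> /subsetP AB [P' [-> lP uP pP]]; exists P'; split => //.
by apply: sub_path pP => u v /AB.
Qed.

Lemma dpath_head A x y P : dpath A x y P -> P = x :: behead P.
Proof. by case=> P' [-> _ _ _]. Qed.

Lemma dpath_rev A x y P : dpath A x y P -> rev P = y :: behead (rev P).
Proof. by case=> P' [-> <- _ _]; rewrite lastI rev_rcons. Qed.

Lemma dpath_mem_first A x y P : dpath A x y P -> x \in P.
Proof. by move/dpath_head ->; rewrite mem_head. Qed.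

Lemma dpath_mem_last A x y P : dpath A x y P -> y \in P.
Proof. by move/dpath_rev; rewrite -mem_rev => ->; rewrite mem_head. Qed.

Lemma dpath_uniq A x y P : dpath A x y P -> uniq P.
Proof. by case=> P' [-> _ uP _]. Qed.

Lemma dpath1 A x : dpath A x x [:: x].
Proof. by exists [::]. Qed.

Lemma dpath_cons A x y z P :
  (x, y) \in A -> x \notin P -> dpath A y z P -> dpath A x z (x :: P).
Proof.
move=> xy xP [P' [eP lP uP pP]]; subst P; exists (y :: P'); split => //.
  by rewrite /= xP.
by rewrite /= xy.
Qed.

Lemma dpath_cat A x y z P R :
  dpath A x y P -> dpath A y z R -> uniq (P ++ behead R) ->
  dpath A x z (P ++ behead R).
Proof.
case=> P' [-> lP _ pP] [R' [-> lR _ pR]] uPR; exists (P' ++ R'); split => //.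
  by rewrite last_cat lP.
by rewrite cat_path pP lP.
Qed.

Lemma plen_cat_behead P R : P != [::] -> plen (P ++ behead R) = plen P + plen R.
Proof. by rewrite /plen size_cat size_behead; case: P => //= x P _; lia. Qed.

Lemma behead_catl P R : P != [::] -> behead (P ++ R) = behead P ++ R.
Proof. by case: P. Qed.

Lemma cat_behead_rev_sub P R C :
  {subset P ++ behead (rev R) ++ behead C <= P ++ R ++ C}.
Proof.
move=> x; rewrite !mem_cat => /or3P [-> // | /mem_behead xR | /mem_behead ->].
  by rewrite mem_rev in xR; rewrite xR orbT.
by rewrite !orbT.
Qed.

Lemma uniq_glue P x R :
  uniq P -> uniq (x :: R) -> {in P, forall y, y \in x :: R -> y = x} ->
  uniq (P ++ R).
Proof.
move=> uP; rewrite cons_uniq => /andP [xR uR] PR; rewrite cat_uniq uP uR andbT.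
apply/hasPn => y yR; apply/negP => yP.
by move: xR; rewrite -(PR y yP) ?yR // in_cons yR orbT.
Qed.

End Walks.

Definition scons (T : Type) (x : T) (f : nat -> T) (i : nat) : T :=
  if i is j.+1 then f j else x.

Section AltPaths.
Variable V : finType.
Implicit Types (A B : {set V * V}) (C : seq V).

Lemma alt_vertices_catl a (Q Q' : nat -> seq V) C :
  Q 0 != [::] ->
  alt_vertices a (scons (C ++ behead (Q 0)) (fun j => Q j.+1)) Q' =
  C ++ behead (alt_vertices a Q Q').
Proof. by rewrite /alt_vertices; case: (Q 0) => //= y R _; rewrite catA. Qed.

Lemma alt_vertices_cons a (Q Q' : nat -> seq V) (Q0 Q'0 : seq V) :
  0 < a -> Q 0 != [::] ->
  alt_vertices a.+1 (scons Q0 Q) (scons Q'0 Q') =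
  Q0 ++ behead (rev Q'0) ++ behead (alt_vertices a Q Q').
Proof.
case: a => [|a] // _; rewrite /alt_vertices /= -[iota 1 a]/(iota (1 + 0) a).
by rewrite iotaDl -map_comp; case: (Q 0) => //= y R _; rewrite !catA.
Qed.

Lemma alt_vertices_head a (Q Q' : nat -> seq V) x :
  Q 0 = x :: behead (Q 0) -> alt_vertices a Q Q' = x :: behead (alt_vertices a Q Q').
Proof. by rewrite /alt_vertices => ->. Qed.

Lemma alt_vertices_uniq0 a (Q Q' : nat -> seq V) : uniq (alt_vertices a Q Q') -> uniq (Q 0).
Proof. by rewrite cat_uniq => /and3P []. Qed.

Lemma alt_path_sub A B a b s t Q Q' :
  A \subset B -> alt_path A a b s t Q Q' -> alt_path B a b s t Q Q'.
Proof.
move=> AB [dQ dQ' lQ lQ' uQ]; split => // i ia.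
  exact: dpath_sub AB (dQ i ia).
exact: dpath_sub AB (dQ' i ia).
Qed.

Lemma alt_path_catl A a b s t Q Q' x C :
  0 < a -> alt_path A a b s t Q Q' -> dpath A x (s 0) C ->
  uniq (C ++ behead (alt_vertices a Q Q')) ->
  alt_path A a b (scons x (fun j => s j.+1)) t
    (scons (C ++ behead (Q 0)) (fun j => Q j.+1)) Q'.
Proof.
move=> a0 [dQ dQ' lQ lQ' _] dC uC.
have Q0n : Q 0 != [::] by rewrite (dpath_head (dQ 0 a0)).
rewrite -alt_vertices_catl // in uC.
split => //; last by case=> [|i] // /lQ; apply.
case=> [_ | i /dQ //]; apply: dpath_cat dC (dQ 0 a0) _.
exact: alt_vertices_uniq0 uC.
Qed.

Lemma alt_path_cons A a b s t Q Q' x T Q0 Q'0 :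
  0 < a -> alt_path A a b s t Q Q' ->
  dpath A x T Q0 -> dpath A (s 0) T Q'0 -> b <= plen Q'0 -> b <= plen (Q 0) ->
  uniq (Q0 ++ behead (rev Q'0) ++ behead (alt_vertices a Q Q')) ->
  alt_path A a.+1 b (scons x s) (scons T t) (scons Q0 Q) (scons Q'0 Q').
Proof.
move=> a0 [dQ dQ' lQ lQ' _] dQ0 dQ'0 lQ'0 lQ0 u.
have Q0n : Q 0 != [::] by rewrite (dpath_head (dQ 0 a0)).
split; first by case=> [|i /dQ].
- by case=> [|i /dQ'].
- by case=> [|[|i]] // _ /(lQ i.+1 isT).
- by case=> [|i /lQ'].
- by rewrite alt_vertices_cons.
Qed.

Lemma alt_vertices_cons2 a Q Q' Q0 Q'0 C :
  Q 0 != [::] -> C != [::] ->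
  alt_vertices a.+2 (scons Q0 (scons (C ++ behead (Q 0)) (fun j => Q j.+1)))
    (scons Q'0 Q') =
  (Q0 ++ behead (rev Q'0) ++ behead C) ++ behead (alt_vertices a.+1 Q Q').
Proof.
move=> Q0n Cn; rewrite alt_vertices_cons //; last by case: C Cn.
by rewrite alt_vertices_catl // behead_catl // -!catA.
Qed.

Lemma alt_path_cons2 A a b s t Q Q' p S T Q0 Q'0 C :
  alt_path A a.+1 b s t Q Q' -> b <= plen (Q 0) ->
  dpath A p T Q0 -> dpath A S T Q'0 -> dpath A S (s 0) C -> b <= plen Q'0 ->
  uniq (Q0 ++ behead (rev Q'0) ++ behead C) ->
  {in Q0 ++ Q'0 ++ C, forall x, x \in alt_vertices a.+1 Q Q' -> x = s 0} ->
  alt_path A a.+2 b (scons p (scons S (fun j => s j.+1))) (scons T t)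
    (scons Q0 (scons (C ++ behead (Q 0)) (fun j => Q j.+1))) (scons Q'0 Q').
Proof.
move=> RQ lQ dQ0 dQ'0 dC lQ'0 uG meet.
have dQ : dpath A (s 0) (t 0) (Q 0) by case: RQ => dQ *; apply: dQ.
have Q0n : Q 0 != [::] by rewrite (dpath_head dQ).
have Cn : C != [::] by rewrite (dpath_head dC).
have ealt := alt_vertices_head a.+1 Q' (dpath_head dQ).
have ualt : uniq (s 0 :: behead (alt_vertices a.+1 Q Q')) by rewrite -ealt; case: RQ.
rewrite {}ealt in meet.
have uC : uniq (C ++ behead (alt_vertices a.+1 Q Q')).
  by apply: uniq_glue (dpath_uniq dC) ualt _ => x xC; apply: meet; rewrite !mem_cat xC !orbT.
apply: alt_path_cons (alt_path_catl _ RQ dC uC) dQ0 dQ'0 lQ'0 _ _ => //.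
  by rewrite /= plen_cat_behead // (leq_trans lQ) ?leq_addl.
have := uniq_glue uG ualt (fun x xG => meet x (cat_behead_rev_sub xG)).
by rewrite alt_vertices_catl // behead_catl // -!catA.
Qed.

End AltPaths.

Section AnchoredAltPaths.
Variable V : finType.
Implicit Types (A B : {set V * V}) (W X : {set V}) (x y z : V).

Definition alt_path_within A W a b c x y : Prop :=
  exists s t (Q Q' : nat -> seq V),
    [/\ alt_path A a b s t Q Q', s 0 = x, t a.-1 = y,
        {subset alt_vertices a Q Q' <= W} &
        c <= plen (Q 0) /\ (1 < a -> b <= plen (Q a.-1))].

Lemma alt_path_within_sub A B W X a b c c' x y :
  A \subset B -> W \subset X -> c' <= c ->
  alt_path_within A W a b c x y -> alt_path_within B X a b c' x y.
Proof.
move=> AB /subsetP WX cc' [s [t [Q [Q' [RQ sx ty QW [lQ0 lQa]]]]]].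
exists s, t, Q, Q'; split => //; first exact: alt_path_sub AB RQ.
  by move=> v /QW /WX.
by split=> //; apply: leq_trans lQ0.
Qed.

Lemma alt_path_within1 A W b x : x \in W -> alt_path_within A W 1 b 0 x x.
Proof.
move=> xW; exists (fun=> x), (fun=> x), (fun=> [:: x]), (fun=> [::]).
split=> //; last by move=> v; rewrite /= inE => /eqP ->.
by split=> // -[|i] // _; apply: dpath1.
Qed.

Lemma alt_path_within_prepend A W a b c x y z :
  0 < a -> x \notin W -> alt_path_within A W a b c y z ->
  alt_path_within ((x, y) |: A) (x |: W) a b c.+1 x z.
Proof.
move=> a0 xW [s [t [Q [Q' [RQ <- tz QW [lQ0 lQa]]]]]].
have {}RQ := alt_path_sub (subsetUr [set (x, s 0)] A) RQ.
have dQ0 : dpath ((x, s 0) |: A) (s 0) (t 0) (Q 0) by case: RQ => dQ *; apply: dQ.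
have ealt := alt_vertices_head a Q' (dpath_head dQ0).
have xQ : x \notin alt_vertices a Q Q' by apply: contra xW => /QW.
have dC : dpath ((x, s 0) |: A) x (s 0) [:: x; s 0].
  apply: dpath_cons (setU11 _ _) _ (dpath1 _ _); rewrite inE.
  by apply: contra xQ => /eqP ->; rewrite ealt mem_head.
have uC : uniq ([:: x; s 0] ++ behead (alt_vertices a Q Q')).
  by rewrite [_ ++ _]/= -ealt cons_uniq xQ; case: RQ.
exists (scons x (fun j => s j.+1)), t,
  (scons ([:: x; s 0] ++ behead (Q 0)) (fun j => Q j.+1)), Q'.
have Q0n : Q 0 != [::] by rewrite (dpath_head dQ0).
split; [exact: alt_path_catl a0 RQ dC uC | by [] | exact: tz | |].
- move=> v; rewrite alt_vertices_catl // [_ ++ _]/= -ealt in_cons.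
  by case/orP=> [/eqP -> | /QW]; [rewrite setU11 | apply: setU1r].
- split; first by move: lQ0; rewrite plen_cat_behead // /plen /=; lia.
  move=> a1; have := lQa a1; case E : a.-1 => [|j] //; lia.
Qed.

(* [Q0], [Q'0], [C] are the segments Q_1, Q'_1, Q_2 of a (2,b)-alternating
   path from [p] to [q] whose last segment may be short. *)
Definition alt_path2 A W b p q : Prop :=
  exists S T (Q0 Q'0 C : seq V),
    [/\ dpath A p T Q0, dpath A S T Q'0, dpath A S q C, b <= plen Q'0 &
        uniq (Q0 ++ behead (rev Q'0) ++ behead C) /\
        {subset Q0 ++ Q'0 ++ C <= W}].

Lemma alt_path_within_cons2 A W AG VG a b p q y :
  alt_path2 AG VG b p q -> {in VG, forall x, x \in W -> x = q} ->
  alt_path_within A W a.+1 b b q y ->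
  alt_path_within (A :|: AG) (W :|: VG) a.+2 b 0 p y.
Proof.
move=> [S [T [Q0 [Q'0 [C [dQ0 dQ'0 dC lQ'0 [uG GV]]]]]]] VGW.
move=> [s [t [Q [Q' [RQ sq ty QW [lQ lQa]]]]]]; subst q.
have GB := subsetUr A AG.
have Q0n : Q 0 != [::] by case: RQ => dQ *; rewrite (dpath_head (dQ 0 isT)).
have Cn : C != [::] by rewrite (dpath_head dC).
exists (scons p (scons S (fun j => s j.+1))), (scons T t),
  (scons Q0 (scons (C ++ behead (Q 0)) (fun j => Q j.+1))), (scons Q'0 Q').
split=> //.
- apply: alt_path_cons2 (alt_path_sub (subsetUl A AG) RQ) lQ _ _ _ lQ'0 uG _.
  + exact: dpath_sub GB dQ0.
  + exact: dpath_sub GB dQ'0.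
  + exact: dpath_sub GB dC.
  + by move=> x /GV xG /QW; apply: VGW.
- move=> x; rewrite alt_vertices_cons2 // mem_cat inE.
  by case/orP=> [/cat_behead_rev_sub/GV -> | /mem_behead/QW ->]; rewrite ?orbT.
- split=> // _; case: a lQa {RQ ty QW} => [_ | a /(_ isT) //].
  by rewrite /= plen_cat_behead // (leq_trans lQ) ?leq_addl.
Qed.

End AnchoredAltPaths.

Section Gadgets.
Variables (V : finType) (b : nat) (VG : {set V}) (AG : {set V * V}) (p q : V).
Hypothesis b_gt0 : 0 < b.

Lemma gadget_I_alt_path2 : gadget_I b VG AG p q -> alt_path2 AG VG b p q.
Proof.
move=> [c [uc lc lenc -> ->]].
have dc : dpath (arcs_of (rcons (q :: c) q)) q p (q :: c).
  by rewrite -lc -cats1; apply: dpath_arcs_of.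
have eG : [:: p] ++ behead (rev (q :: c)) = rev (q :: c) by rewrite [in RHS](dpath_rev dc).
exists q, p, [:: p], (q :: c), [:: q]; split=> //; try exact: dpath1.
- by move: lenc; rewrite /plen /=; nia.
- split; first by rewrite cats0 eG rev_uniq.
  move=> x; rewrite in_set !mem_cat !mem_seq1 => /or3P [/eqP -> | // | /eqP ->].
    exact: dpath_mem_last dc.
  exact: mem_head.
Qed.

Lemma gadget_II_alt_path2 : gadget_II b VG AG p q -> alt_path2 AG VG b p q.
Proof.
move=> [r [P [dP lP qP -> ->]]].
have rP := dpath_mem_first dP.
have eG : [:: p] ++ behead (rev P) = rev P by rewrite [in RHS](dpath_rev dP).
exists r, p, [:: p], P, [:: r; q]; split.
- exact: dpath1.
- by apply: dpath_sub dP; apply: subsetUl.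
- apply: dpath_cons (dpath1 _ _); last by rewrite inE; apply: contraNneq qP => <-.
  by rewrite inE; apply/orP; right; apply: imset_f.
- by move: lP; nia.
- split; first by rewrite catA eG cats1 rcons_uniq mem_rev qP rev_uniq (dpath_uniq dP).
  move=> x; rewrite !mem_cat !inE => /or3P [/eqP -> | -> | /orP [/eqP -> | ->]].
  + by rewrite (dpath_mem_last dP) orbT.
  + by rewrite orbT.
  + by rewrite rP orbT.
  + by [].
Qed.

Lemma gadget_III_alt_path2 : gadget_III b VG AG p q -> alt_path2 AG VG b p q.
Proof.
move=> [r [P1 [P2 [[_ [d1 d2]] meet12 [_ l2] -> eA]]]].
have sub1 : arcs_of P1 \subset AG.
  by rewrite eA; apply: subset_trans (subsetUl _ _) (subsetUr _ _).
have sub2 : arcs_of P2 \subset AG.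
  by rewrite eA; apply: subset_trans (subsetUr _ _) (subsetUr _ _).
exists q, r, P1, P2, [:: q]; split.
- exact: dpath_sub sub1 d1.
- exact: dpath_sub sub2 d2.
- exact: dpath1.
- by move: l2; lia.
- split.
    have u2 : uniq (r :: behead (rev P2)).
      by rewrite -(dpath_rev d2) rev_uniq (dpath_uniq d2).
    rewrite cats0; apply: uniq_glue (dpath_uniq d1) u2 _ => x x1.
    rewrite -(dpath_rev d2) mem_rev => x2.
    by apply/set1P; rewrite -meet12 !inE x1 x2.
  move=> x; rewrite !mem_cat !inE => /or3P [-> | -> | /eqP ->] //; first by rewrite orbT.
  by rewrite (dpath_mem_first d2) orbT.
Qed.

Lemma gadget_alt_path2 :
  [\/ gadget_I b VG AG p q, gadget_II b VG AG p q | gadget_III b VG AG p q] ->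
  alt_path2 AG VG b p q.
Proof.
by case=> [/gadget_I_alt_path2 | /gadget_II_alt_path2 | /gadget_III_alt_path2].
Qed.

End Gadgets.

Definition chain_vertices (V : finType) (v0 : V) (vs : seq V) (A2 : {set V * V})
    (VG : V * V -> {set V}) : {set V} :=
  [set x in v0 :: vs] :|: \bigcup_(e in A2) VG e.

Section Chains.
Variables (V : finType) (b : nat) (v0 : V) (vs : seq V) (A2 : {set V * V}).
Variables (VG : V * V -> {set V}) (AG : V * V -> {set V * V}).
Hypothesis chain : is_chain b v0 vs A2 VG AG.

Lemma chain_gadget_spine e x :
  e \in A2 -> x \in VG e -> x \in v0 :: vs -> x = e.1 \/ x = e.2.
Proof.
case: chain => _ _ gadgets _ eA xe xs; have [spine _] := gadgets e eA.
by apply/set2P; rewrite -spine in_setI in_set xs xe.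
Qed.

Lemma chain_gadget_alt_path2 e :
  0 < b -> e \in A2 -> alt_path2 (AG e) (VG e) b e.1 e.2.
Proof. by case: chain => _ _ gadgets _ b0 /gadgets [_]; apply: gadget_alt_path2. Qed.

End Chains.

Lemma chain_nil (V : finType) b (v0 : V) A2 VG AG :
  is_chain b v0 [::] A2 VG AG -> A2 = set0.
Proof.
case=> _ A2arcs _ _; apply/eqP; rewrite -subset0; apply: subset_trans A2arcs _.
by apply/subsetP => e; rewrite !inE.
Qed.

Section ChainTail.
Variables (V : finType) (b : nat) (v0 v1 : V) (vs : seq V) (A2 : {set V * V}).
Variables (VG : V * V -> {set V}) (AG : V * V -> {set V * V}).
Hypothesis chain : is_chain b v0 (v1 :: vs) A2 VG AG.
Let e0 := (v0, v1).

Lemma chain_tail_arc e : e \in A2 -> e != e0 -> e \in arcs_of (v1 :: vs).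
Proof.
case: chain => _ /subsetP A2spine _ _ eA ne.
by move: (A2spine e eA); rewrite arcs_of_cons2 in_setU1 (negbTE ne).
Qed.

Lemma chain_head_notin_spine_tail : v0 \notin v1 :: vs.
Proof. by case: chain => /andP []. Qed.

Lemma chain_gadget_spine_tail e x :
  e \in A2 -> e != e0 -> x \in VG e -> x \in v0 :: v1 :: vs -> x \in v1 :: vs.
Proof.
move=> eA ne xe xs; have [e1 e2] := mem_arcs_of (chain_tail_arc eA ne).
by case: (chain_gadget_spine chain eA xe xs) => ->.
Qed.

Lemma chain_tail : is_chain b v1 vs (A2 :\ e0) VG AG.
Proof.
case: (chain) => /andP [_ uvs] _ gadgets disj; split=> //.
- by apply/subsetP => e /setD1P [ne eA]; apply: chain_tail_arc.
- move=> e /setD1P [ne eA]; have [spine gadget] := gadgets e eA; split=> //.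
  have [e1 e2] := mem_arcs_of (chain_tail_arc eA ne).
  apply/setP => x; rewrite in_setI in_set; apply/andP/set2P => [[xs xe] | exy].
    by apply/set2P; rewrite -spine in_setI in_set in_cons xs xe orbT.
  have : x \in [set e.1; e.2] by apply/set2P.
  by rewrite -spine in_setI => /andP [_ ->]; case: exy => ->.
- move=> e f /setD1P [ne eA] /setD1P [_ fA] nef; apply/subsetP => x xef.
  have xs := subsetP (disj e f eA fA nef) x xef; move: xef; rewrite in_setI in_set.
  by case/andP=> xe _; apply: chain_gadget_spine_tail eA ne xe _; rewrite in_set in xs.
Qed.

Lemma chain_arcs_tail :
  (v0, v1) |: chain_arcs v1 vs (A2 :\ e0) AG \subset chain_arcs v0 (v1 :: vs) A2 AG.
Proof.
rewrite /chain_arcs arcs_of_cons2 setUA; apply: setUS.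
by apply/bigcupsP => e /setD1P [_ eA]; apply: bigcup_sup eA.
Qed.

Lemma chain_vertices_tail :
  v0 |: chain_vertices v1 vs (A2 :\ e0) VG \subset chain_vertices v0 (v1 :: vs) A2 VG.
Proof.
rewrite /chain_vertices setUA; apply: setUSS.
  by apply/subsetP => x; rewrite !inE.
by apply/bigcupsP => e /setD1P [_ eA]; apply: bigcup_sup eA.
Qed.

Lemma chain_head_notin_tail : v0 \notin chain_vertices v1 vs (A2 :\ e0) VG.
Proof.
rewrite in_setU in_set negb_or chain_head_notin_spine_tail /=.
apply/bigcupP => -[e /setD1P [ne eA] v0e].
by move: chain_head_notin_spine_tail; rewrite (chain_gadget_spine_tail eA ne v0e) ?mem_head.
Qed.

Lemma chain_first_gadget_meets_tail :
  e0 \in A2 -> {in VG e0, forall x, x \in chain_vertices v1 vs (A2 :\ e0) VG -> x = v1}.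
Proof.
move=> e0A x xe0 xtail.
have xs : x \in v1 :: vs.
  move: xtail; rewrite in_setU in_set => /orP [-> // | /bigcupP [f /setD1P [nf fA] xf]].
  have xs : x \in [set x in v0 :: v1 :: vs].
    case: chain => _ _ _ disj; apply: (subsetP (disj f e0 fA e0A nf)).
    by rewrite in_setI xf xe0.
  by apply: chain_gadget_spine_tail fA nf xf _; rewrite in_set in xs.
have xs' : x \in v0 :: v1 :: vs by rewrite in_cons xs orbT.
case: (chain_gadget_spine chain e0A xe0 xs') => // xv0.
by move: chain_head_notin_spine_tail; rewrite /e0 /= in xv0; rewrite -xv0 xs.
Qed.

Lemma chain_tail_gadget_sub :
  e0 \in A2 ->
  chain_arcs v1 vs (A2 :\ e0) AG :|: AG e0 \subset chain_arcs v0 (v1 :: vs) A2 AG /\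
  chain_vertices v1 vs (A2 :\ e0) VG :|: VG e0 \subset chain_vertices v0 (v1 :: vs) A2 VG.
Proof.
move=> e0A; split; rewrite subUset; apply/andP; split;
  try exact: subset_trans (bigcup_sup _ e0A) (subsetUr _ _).
  exact: subset_trans (subsetUr _ _) chain_arcs_tail.
exact: subset_trans (subsetUr _ _) chain_vertices_tail.
Qed.

End ChainTail.

Lemma chain_alt_path_within (V : finType) b (v0 : V) vs A2 VG AG a c :
  0 < b -> is_chain b v0 vs A2 VG AG -> 0 < a -> a.-1 * b.+1 + c <= #|A2| ->
  alt_path_within (chain_arcs v0 vs A2 AG) (chain_vertices v0 vs A2 VG)
    a b c v0 (last v0 vs).
Proof.
move=> b0; elim: vs v0 A2 a c => [|v1 vs IH] v0 A2 a c chain a0 le_c.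
  rewrite (chain_nil chain) cards0 in le_c; have [-> ->] : a = 1 /\ c = 0 by nia.
  by apply: alt_path_within1; rewrite !inE eqxx.
have chain' := chain_tail chain.
have prepend c' : a.-1 * b.+1 + c' <= #|A2 :\ (v0, v1)| ->
    alt_path_within (chain_arcs v0 (v1 :: vs) A2 AG) (chain_vertices v0 (v1 :: vs) A2 VG)
      a b c'.+1 v0 (last v0 (v1 :: vs)).
  move=> le_c'; have := IH v1 _ a c' chain' a0 le_c'.
  move/(alt_path_within_prepend a0 (chain_head_notin_tail chain)).
  by apply: alt_path_within_sub; [exact: chain_arcs_tail | exact: chain_vertices_tail |].
have [e0A | e0A] := boolP ((v0, v1) \in A2); last first.
  rewrite (cardsD1 (v0, v1)) (negbTE e0A) add0n in le_c.
  by apply: alt_path_within_sub (prepend c _); rewrite ?leqnSn.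
rewrite (cardsD1 (v0, v1)) e0A add1n in le_c.
case: c le_c => [|c] le_c; last by apply: prepend; rewrite -ltnS -addnS.
case: a a0 le_c prepend => [|[|a]] // _ le_c prepend.
  by apply: alt_path_within_sub (prepend 0 _).
have [GA GV] := chain_tail_gadget_sub vs VG AG e0A.
have le_b : a * b.+1 + b <= #|A2 :\ (v0, v1)|.
  by move: le_c; rewrite /= addn0 mulSn addSn ltnS addnC.
have := alt_path_within_cons2 (chain_gadget_alt_path2 chain b0 e0A)
  (chain_first_gadget_meets_tail chain e0A) (IH v1 _ a.+1 b chain' isT le_b).
exact: alt_path_within_sub GA GV (leqnn 0).
Qed.

Theorem lemma2p7 (V : finType) (a b : nat) (v0 : V) (vs : seq V)
    (A2 : {set V * V}) (VG : V * V -> {set V}) (AG : V * V -> {set V * V}) :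
  1 <= a -> 1 <= b ->
  is_chain b v0 vs A2 VG AG ->
  a * (b + 1) - 1 <= #|A2| ->
  exists (s t : nat -> V) (Q Q' : nat -> seq V),
    [/\ strong_alt_path (chain_arcs v0 vs A2 AG) a b s t Q Q',
        s 0 = v0 & t a.-1 = last v0 vs].
Proof.
move=> a0 b0 chain le_A2.
have le_b : a.-1 * b.+1 + b <= #|A2|.
  by case: a a0 le_A2 => [|a] // _; rewrite mulSn addn1 /=; lia.
have [s [t [Q [Q' [R s0 ta _ [lQ0 lQa]]]]]] := chain_alt_path_within b0 chain a0 le_b.
exists s, t, Q, Q'; split=> //; split=> //.
by case: a a0 lQa {R ta le_A2 le_b} => [|[|a]] // _; apply.
Qed.
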